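(* Let $A_1,\dots,A_{20}$ be the vertices of a regular dodecahedron in $\mathbb R^3$ and let $\Gamma$ be its circumscribed sphere. There are at most eight real numbers $\lambda$ for which the function $M\mapsto\sum_{i=1}^{20}|MA_i|^{\lambda}$ is constant on $\Gamma\setminus\{A_1,\dots,A_{20}\}$.
   Context: $|MA|$ denotes Euclidean distance. *)

From Stdlib Require Import Reals List.
Import ListNotations.
Open Scope R_scope.

Definition point : Type := (R * R * R)%type.

Definition dist3 (P Q : point) : R :=
  let '(x1, y1, z1) := P in
  let '(x2, y2, z2) := Q in
  sqrt ((x1 - x2)^2 + (y1 - y2)^2 + (z1 - z2)^2).

Definition phi : R := (1 + sqrt 5) / 2.

Definition std_dodeca_vertices : list point :=
  [ (1,1,1); (1,1,-1); (1,-1,1); (1,-1,-1);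
    (-1,1,1); (-1,1,-1); (-1,-1,1); (-1,-1,-1);
    (0, /phi, phi); (0, /phi, -phi); (0, -/phi, phi); (0, -/phi, -phi);
    (/phi, phi, 0); (/phi, -phi, 0); (-/phi, phi, 0); (-/phi, -phi, 0);
    (phi, 0, /phi); (phi, 0, -/phi); (-phi, 0, /phi); (-phi, 0, -/phi) ].

Definition is_similarity (f : point -> point) : Prop :=
  exists s : R, 0 < s /\ forall P Q, dist3 (f P) (f Q) = s * dist3 P Q.

(* A list A of 20 points is the vertex list of a regular dodecahedron iff it is
   the image of the standard vertex list under a similarity (all regular
   dodecahedra are similar to each other). *)
Definition is_regular_dodecahedron_vertices (A : list point) : Prop :=
  exists f, is_similarity f /\ A = map f std_dodeca_vertices.

Definition circumscribes (O : point) (r : R) (A : list point) : Prop :=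
  forall P, In P A -> dist3 O P = r.

Definition power_sum (A : list point) (lam : R) (M : point) : R :=
  fold_right (fun P acc => Rpower (dist3 M P) lam + acc) 0 A.

Definition const_on_sphere_minus (A : list point) (O : point) (r lam : R) : Prop :=
  exists C : R, forall M, dist3 O M = r -> ~ In M A -> power_sum A lam M = C.

From Stdlib Require Import Reals List Lra Lia Sorted Permutation Mergesort Orders.
Import ListNotations.
Open Scope R_scope.

(* Idea: pick two points W1, W2 of the circumsphere of the standard
   dodecahedron with different distance profiles to the vertices. If the
   power sum is constant for lam, it takes the same value at W1 and W2, so lam
   is a zero of the difference lam |-> sum_d c_d * exp (lam * ln (sqrt d)),
   an exponential sum over the 11 distinct squared distances d whose
   coefficients c_d (multiplicities with signs) show 8 sign changes. By
   Descartes' rule of signs for exponential sums, it has at most 8 zeros. *)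

Definition expsum (l : list (R * R)) (x : R) : R :=
  fold_right (fun p acc => snd p * exp (fst p * x) + acc) 0 l.

Lemma expsum_cons (p : R * R) (l : list (R * R)) (x : R) :
  expsum (p :: l) x = snd p * exp (fst p * x) + expsum l x.
Proof. reflexivity. Qed.

Definition sign_change (p q : R * R) : nat :=
  if Rlt_dec (snd p * snd q) 0 then 1%nat else 0%nat.

Fixpoint sign_changes (l : list (R * R)) : nat :=
  match l with
  | p :: ((q :: _) as t) => (sign_change p q + sign_changes t)%nat
  | _ => 0%nat
  end.

Lemma sign_changes_cons2 (p q : R * R) (t : list (R * R)) :
  sign_changes (p :: q :: t) = (sign_change p q + sign_changes (q :: t))%nat.
Proof. reflexivity. Qed.

Definition exponents_increasing (l : list (R * R)) : Prop :=
  StronglySorted (fun p q => fst p < fst q) l.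

Definition coeffs_nonzero (l : list (R * R)) : Prop :=
  Forall (fun p => snd p <> 0) l.

(* If f = expsum l, then (exp (-b x) f(x))' = exp (-b x) * expsum (shift_deriv b l) x:
   each term (a, c) becomes (a - b, c * (a - b)). *)
Definition dterm (b : R) (p : R * R) : R * R := (fst p - b, snd p * (fst p - b)).

Definition shift_deriv (b : R) (l : list (R * R)) : list (R * R) := map (dterm b) l.

Lemma sign_changes_shift_deriv_cons2 (b : R) (p q : R * R) (t : list (R * R)) :
  sign_changes (shift_deriv b (p :: q :: t)) =
  (sign_change (dterm b p) (dterm b q) + sign_changes (shift_deriv b (q :: t)))%nat.
Proof. reflexivity. Qed.

Lemma expsum_derivable (l : list (R * R)) (x : R) :
  derivable_pt_lim (expsum l) x (expsum (map (fun p => (fst p, snd p * fst p)) l) x).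
Proof.
  induction l as [|p t IH].
  - apply derivable_pt_lim_const.
  - assert (Hlin : derivable_pt_lim (fun y => fst p * y) x (fst p)).
    { pose proof (derivable_pt_lim_scal id (fst p) x 1 (derivable_pt_lim_id x)) as H.
      rewrite Rmult_1_r in H. exact H. }
    pose proof (derivable_pt_lim_comp _ exp x _ _ Hlin (derivable_pt_lim_exp (fst p * x))) as Hexp.
    pose proof (derivable_pt_lim_scal _ (snd p) x _ Hexp) as Hterm.
    pose proof (derivable_pt_lim_plus _ _ x _ _ Hterm IH) as Hsum.
    cbn [map]. rewrite expsum_cons. cbn [fst snd].
    replace (snd p * fst p * exp (fst p * x)) with (snd p * (exp (fst p * x) * fst p)) by ring.
    exact Hsum.
Qed.

Lemma expsum_shift (l : list (R * R)) (b x : R) :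
  expsum (map (fun p => (fst p - b, snd p)) l) x = exp (- b * x) * expsum l x.
Proof.
  induction l as [|p t IH]; cbn [map]; [unfold expsum; cbn; ring|].
  rewrite !expsum_cons, IH. cbn [fst snd].
  replace ((fst p - b) * x) with (- b * x + fst p * x) by ring.
  rewrite exp_plus. ring.
Qed.

(* Rolle's theorem, applied to exp (-b x) f(x) between consecutive zeros of f:
   n + 1 sorted zeros of f give n sorted zeros of expsum (shift_deriv b l). *)
Lemma rolle_step (l : list (R * R)) (b z0 : R) (zs : list R) :
  StronglySorted Rlt (z0 :: zs) -> Forall (fun z => expsum l z = 0) (z0 :: zs) ->
  exists zs', length zs' = length zs /\ StronglySorted Rlt zs' /\
    Forall (fun z => expsum (shift_deriv b l) z = 0) zs' /\ Forall (Rlt z0) zs'.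
Proof.
  revert z0. induction zs as [|z1 zs IH]; intros z0 Hsort Hzero.
  - exists []. repeat split; constructor.
  - apply StronglySorted_inv in Hsort as [Hsort Hgt0].
    apply Forall_cons_iff in Hgt0 as [H01 Hgt0].
    apply Forall_cons_iff in Hzero as [Hz0 Hzero].
    pose proof Hzero as Hzero1. apply Forall_cons_iff in Hzero1 as [Hz1 _].
    destruct (IH z1 Hsort Hzero) as [zs' [Hlen [Hsort' [Hzero' Hgt1]]]].
    set (g := expsum (map (fun p => (fst p - b, snd p)) l)).
    assert (Hg : forall z, expsum l z = 0 -> g z = 0).
    { intros z Hz. unfold g. rewrite expsum_shift, Hz. ring. }
    assert (Hderiv : forall c, z0 <= c <= z1 -> derivable_pt_lim g c (expsum (shift_deriv b l) c)).
    { intros c _. pose proof (expsum_derivable (map (fun p => (fst p - b, snd p)) l) c) as H.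
      rewrite map_map in H. exact H. }
    destruct (MVT_cor2 g _ z0 z1 H01 Hderiv) as [c [Hmvt [Hc0 Hc1]]].
    rewrite (Hg z0 Hz0), (Hg z1 Hz1) in Hmvt.
    assert (Hc : expsum (shift_deriv b l) c = 0).
    { apply (Rmult_eq_reg_r (z1 - z0)); lra. }
    exists (c :: zs'). repeat split.
    + cbn. now rewrite Hlen.
    + constructor; [exact Hsort'|].
      apply (Forall_impl _ (fun y (Hy : z1 < y) => Rlt_trans c z1 y Hc1 Hy)), Hgt1.
    + constructor; assumption.
    + constructor; [exact Hc0|].
      apply (Forall_impl _ (fun y (Hy : z1 < y) => Rlt_trans z0 z1 y H01 Hy)), Hgt1.
Qed.

Lemma expsum_pos (l : list (R * R)) (x e : R) :
  l <> [] -> Forall (fun p => 0 < e * snd p) l -> 0 < e * expsum l x.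
Proof.
  induction l as [|p t IH]; intros Hne Hsign; [congruence|].
  apply Forall_cons_iff in Hsign as [Hp Ht].
  pose proof (exp_pos (fst p * x)) as Hexp.
  rewrite expsum_cons.
  destruct t as [|q t].
  - unfold expsum; cbn [fold_right]. nra.
  - assert (0 < e * expsum (q :: t) x) by (apply IH; [discriminate|exact Ht]). nra.
Qed.

Lemma no_sign_change_same_sign (l : list (R * R)) :
  coeffs_nonzero l -> sign_changes l = 0%nat -> exists e, Forall (fun p => 0 < e * snd p) l.
Proof.
  induction l as [|p t IH]; intros Hnz Hsc.
  - exists 1. constructor.
  - apply Forall_cons_iff in Hnz as [Hp Ht].
    destruct t as [|q t].
    + exists (snd p). repeat constructor. exact (Rlt_0_sqr _ Hp).
    + rewrite sign_changes_cons2 in Hsc. unfold sign_change in Hsc.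
      destruct (Rlt_dec (snd p * snd q) 0) as [_|Hpq]; [discriminate|].
      destruct (IH Ht Hsc) as [e He]. exists e. constructor; [|exact He].
      apply Forall_cons_iff in He as [Heq _].
      assert (Hprod : 0 <= (e * snd p) * (e * snd q)).
      { replace ((e * snd p) * (e * snd q)) with ((e * e) * (snd p * snd q)) by ring.
        apply Rmult_le_pos; [apply Rle_0_sqr|lra]. }
      assert (He0 : e <> 0) by (intro; subst; lra).
      assert (Hep : e * snd p <> 0) by (apply Rmult_integral_contrapositive_currified; assumption).
      nra.
Qed.

Lemma sign_change_dterm_same (b : R) (p q : R * R) :
  0 < (fst p - b) * (fst q - b) -> sign_change (dterm b p) (dterm b q) = sign_change p q.
Proof.
  intro Hside. unfold sign_change, dterm; cbn [snd].
  replace (snd p * (fst p - b) * (snd q * (fst q - b)))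
    with (snd p * snd q * ((fst p - b) * (fst q - b))) by ring.
  destruct (Rlt_dec (snd p * snd q * _) 0), (Rlt_dec (snd p * snd q) 0);
    solve [reflexivity | exfalso; nra].
Qed.

Lemma sign_change_dterm_opposite (b : R) (p q : R * R) :
  (fst p - b) * (fst q - b) < 0 -> snd p * snd q < 0 ->
  sign_change (dterm b p) (dterm b q) = 0%nat.
Proof.
  intros Hside Hpq. unfold sign_change, dterm; cbn [snd].
  replace (snd p * (fst p - b) * (snd q * (fst q - b)))
    with (snd p * snd q * ((fst p - b) * (fst q - b))) by ring.
  destruct (Rlt_dec _ 0); [nra|reflexivity].
Qed.

Lemma sign_changes_shift_deriv_below (b : R) (l : list (R * R)) :
  Forall (fun p => b < fst p) l -> sign_changes (shift_deriv b l) = sign_changes l.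
Proof.
  induction l as [|p t IH]; intro Hgt; [reflexivity|].
  apply Forall_cons_iff in Hgt as [Hp Ht].
  destruct t as [|q t]; [reflexivity|].
  pose proof (Forall_inv Ht) as Hq.
  rewrite sign_changes_shift_deriv_cons2, sign_changes_cons2, IH by exact Ht.
  rewrite sign_change_dterm_same by nra. reflexivity.
Qed.

(* Choosing b between the two exponents of the first sign change, shift_deriv b
   removes exactly that sign change and keeps all coefficients nonzero. *)
Lemma first_sign_change_removed (p : R * R) (t : list (R * R)) :
  exponents_increasing (p :: t) -> coeffs_nonzero (p :: t) -> (0 < sign_changes (p :: t))%nat ->
  exists b, fst p < b /\ Forall (fun q => fst q <> b) (p :: t) /\
    S (sign_changes (shift_deriv b (p :: t))) = sign_changes (p :: t).
Proof.
  revert p. induction t as [|q t IH]; intros p Hinc Hnz Hsc; [cbn in Hsc; lia|].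
  apply StronglySorted_inv in Hinc as [Hinc Hgt].
  apply Forall_cons_iff in Hgt as [Hpq Hgt].
  apply Forall_cons_iff in Hnz as [Hp Hnz].
  rewrite sign_changes_cons2 in Hsc |- *.
  destruct (Rlt_dec (snd p * snd q) 0) as [Hchange|Hsame].
  - set (b := (fst p + fst q) / 2).
    assert (Hbelow : Forall (fun r => b < fst r) (q :: t)).
    { constructor; [unfold b; lra|].
      apply StronglySorted_inv in Hinc as [_ Hqt].
      eapply Forall_impl; [|exact Hqt]. intros r Hr. cbn in Hr. unfold b. lra. }
    exists b. split; [unfold b; lra|]. split.
    + constructor; [unfold b; lra|].
      eapply Forall_impl; [|exact Hbelow]. intros r Hr. cbn in Hr. lra.
    + assert (Hside : (fst p - b) * (fst q - b) < 0).
      { apply Rmult_neg_pos; unfold b; lra. }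
      rewrite sign_changes_shift_deriv_cons2, sign_change_dterm_opposite,
        sign_changes_shift_deriv_below by assumption.
      unfold sign_change. destruct (Rlt_dec _ 0); [reflexivity|contradiction].
  - assert (Hsc' : (0 < sign_changes (q :: t))%nat).
    { unfold sign_change in Hsc. destruct (Rlt_dec _ 0); [contradiction|exact Hsc]. }
    destruct (IH q Hinc Hnz Hsc') as [b [Hqb [Hb Hdrop]]].
    exists b. split; [lra|]. split; [constructor; [lra|exact Hb]|].
    rewrite sign_changes_shift_deriv_cons2, sign_change_dterm_same by nra. lia.
Qed.

Lemma shift_deriv_increasing (b : R) (l : list (R * R)) :
  exponents_increasing l -> exponents_increasing (shift_deriv b l).
Proof.
  induction 1 as [|p t Ht IH Hall]; constructor; [exact IH|].
  apply Forall_map. eapply Forall_impl; [|exact Hall]. intros q Hq. cbn in *. lra.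
Qed.

Lemma shift_deriv_nonzero (b : R) (l : list (R * R)) :
  coeffs_nonzero l -> Forall (fun p => fst p <> b) l -> coeffs_nonzero (shift_deriv b l).
Proof.
  intros Hnz Hb. unfold coeffs_nonzero, shift_deriv in *. apply Forall_map, Forall_forall. intros p Hp.
  rewrite Forall_forall in Hnz, Hb.
  apply Rmult_integral_contrapositive_currified; [now apply Hnz|].
  specialize (Hb p Hp). lra.
Qed.

(* Induction on the sign changes,
   combining first_sign_change_removed with rolle_step. *)
Theorem descartes_rule_of_signs (l : list (R * R)) (zs : list R) :
  exponents_increasing l -> coeffs_nonzero l -> l <> [] ->
  StronglySorted Rlt zs -> Forall (fun z => expsum l z = 0) zs ->
  (length zs <= sign_changes l)%nat.
Proof.
  remember (sign_changes l) as k eqn:Hk.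
  revert l zs Hk. induction k as [|k IH]; intros l zs Hk Hinc Hnz Hne Hsort Hzero.
  - destruct zs as [|z zs]; [cbn; lia|]. exfalso.
    destruct (no_sign_change_same_sign l Hnz (eq_sym Hk)) as [e He].
    pose proof (expsum_pos l z e Hne He) as Hpos.
    rewrite (Forall_inv Hzero) in Hpos. lra.
  - destruct l as [|p t]; [congruence|].
    destruct (first_sign_change_removed p t Hinc Hnz) as [b [_ [Hb Hdrop]]]; [lia|].
    destruct zs as [|z0 zs]; [cbn; lia|].
    destruct (rolle_step (p :: t) b z0 zs Hsort Hzero) as [zs' [Hlen [Hsort' [Hzero' _]]]].
    cbn [length]. rewrite <- Hlen. apply le_n_S.
    apply (IH (shift_deriv b (p :: t))); auto.
    + lia.
    + now apply shift_deriv_increasing.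
    + now apply shift_deriv_nonzero.
    + discriminate.
Qed.

Module RleBool <: Orders.TotalLeBool.
  Definition t := R.
  Definition leb (x y : R) : bool := if Rle_dec x y then true else false.
  Lemma leb_total : forall x y, leb x y = true \/ leb y x = true.
  Proof. intros x y. unfold leb. destruct (Rle_dec x y), (Rle_dec y x); auto. lra. Qed.
End RleBool.

Module RSort := Sort RleBool.

Lemma sorted_rearrangement (zs : list R) :
  NoDup zs -> exists ss, Permutation zs ss /\ StronglySorted Rlt ss.
Proof.
  intro Hnd. exists (RSort.sort zs). split; [apply RSort.Permuted_sort|].
  pose proof (Permutation_NoDup (RSort.Permuted_sort zs) Hnd) as Hnd'.
  assert (Hle : StronglySorted (fun x y => RleBool.leb x y = true) (RSort.sort zs)).
  { apply RSort.StronglySorted_sort. intros x y z. unfold RleBool.leb.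
    destruct (Rle_dec x y), (Rle_dec y z), (Rle_dec x z); auto; lra. }
  clear Hnd. induction Hle as [|x t Ht IH Hall]; constructor.
  - apply IH. now inversion Hnd'.
  - inversion Hnd' as [|? ? Hx _]; subst. apply Forall_forall. intros y Hy.
    rewrite Forall_forall in Hall. specialize (Hall y Hy). unfold RleBool.leb in Hall.
    destruct (Rle_dec x y) as [Hxy|]; [|discriminate].
    assert (x <> y) by (intros ->; contradiction). lra.
Qed.

Corollary descartes_rule_of_signs_distinct (l : list (R * R)) (zs : list R) :
  exponents_increasing l -> coeffs_nonzero l -> l <> [] ->
  NoDup zs -> Forall (fun z => expsum l z = 0) zs ->
  (length zs <= sign_changes l)%nat.
Proof.
  intros Hinc Hnz Hne Hnd Hzero.
  destruct (sorted_rearrangement zs Hnd) as [ss [Hperm Hsort]].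
  rewrite (Permutation_length Hperm).
  apply descartes_rule_of_signs; auto.
  exact (Permutation_Forall Hperm Hzero).
Qed.

Definition sq_dist (P Q : point) : R :=
  let '(x1, y1, z1) := P in
  let '(x2, y2, z2) := Q in
  (x1 - x2)^2 + (y1 - y2)^2 + (z1 - z2)^2.

Lemma dist3_sq_dist (P Q : point) : dist3 P Q = sqrt (sq_dist P Q).
Proof. destruct P as [[x1 y1] z1], Q as [[x2 y2] z2]; reflexivity. Qed.

Lemma sq_dist_sym (P Q : point) : sq_dist P Q = sq_dist Q P.
Proof. destruct P as [[x1 y1] z1], Q as [[x2 y2] z2]; cbn; ring. Qed.

Lemma sq_dist_refl (P : point) : sq_dist P P = 0.
Proof. destruct P as [[x y] z]; cbn; ring. Qed.

Lemma sq_dist_nonneg (P Q : point) : 0 <= sq_dist P Q.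
Proof.
  destruct P as [[x1 y1] z1], Q as [[x2 y2] z2]; cbn.
  pose proof (pow2_ge_0 (x1 - x2)); pose proof (pow2_ge_0 (y1 - y2));
  pose proof (pow2_ge_0 (z1 - z2)); lra.
Qed.

Lemma similarity_sq_dist (f : point -> point) (s : R) :
  (forall P Q, dist3 (f P) (f Q) = s * dist3 P Q) ->
  forall P Q, sq_dist (f P) (f Q) = s^2 * sq_dist P Q.
Proof.
  intros Hf P Q. specialize (Hf P Q). rewrite !dist3_sq_dist in Hf.
  rewrite <- (sqrt_sqrt (sq_dist (f P) (f Q))), Hf by apply sq_dist_nonneg.
  replace (s * sqrt (sq_dist P Q) * (s * sqrt (sq_dist P Q)))
    with (s^2 * (sqrt (sq_dist P Q) * sqrt (sq_dist P Q))) by ring.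
  rewrite sqrt_sqrt by apply sq_dist_nonneg. reflexivity.
Qed.

Definition affine4 (w1 w2 w3 w4 : R) (P1 P2 P3 P4 : point) : point :=
  let '(x1, y1, z1) := P1 in let '(x2, y2, z2) := P2 in
  let '(x3, y3, z3) := P3 in let '(x4, y4, z4) := P4 in
  (w1*x1 + w2*x2 + w3*x3 + w4*x4, w1*y1 + w2*y2 + w3*y3 + w4*y4,
   w1*z1 + w2*z2 + w3*z3 + w4*z4).

Lemma sq_dist_affine4 (w1 w2 w3 w4 : R) (P1 P2 P3 P4 Q : point) :
  w1 + w2 + w3 + w4 = 1 ->
  sq_dist (affine4 w1 w2 w3 w4 P1 P2 P3 P4) Q =
  w1 * sq_dist P1 Q + w2 * sq_dist P2 Q + w3 * sq_dist P3 Q + w4 * sq_dist P4 Q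
  - (w1*w2*sq_dist P1 P2 + w1*w3*sq_dist P1 P3 + w1*w4*sq_dist P1 P4
     + w2*w3*sq_dist P2 P3 + w2*w4*sq_dist P2 P4 + w3*w4*sq_dist P3 P4).
Proof.
  destruct P1 as [[x1 y1] z1], P2 as [[x2 y2] z2], P3 as [[x3 y3] z3],
    P4 as [[x4 y4] z4], Q as [[x y] z]. intro Hw. cbn.
  replace w4 with (1 - w1 - w2 - w3) by lra. ring.
Qed.

(* Four non-coplanar vertices of the standard dodecahedron. *)
Definition T1 : point := (1, 1, 1).
Definition T2 : point := (1, 1, -1).
Definition T3 : point := (1, -1, 1).
Definition T4 : point := (-1, 1, 1).

(* Barycentric coordinates with respect to the tetrahedron T1 T2 T3 T4. *)
Definition bary (W : point) : R * R * R * R :=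
  let '(x, y, z) := W in ((x + y + z - 1) / 2, (1 - z) / 2, (1 - y) / 2, (1 - x) / 2).

Definition affine_bary (W : point) (P1 P2 P3 P4 : point) : point :=
  let '(w1, w2, w3, w4) := bary W in affine4 w1 w2 w3 w4 P1 P2 P3 P4.

Lemma sq_dist_affine_bary (W : point) (P1 P2 P3 P4 Q : point) :
  let '(w1, w2, w3, w4) := bary W in
  sq_dist (affine_bary W P1 P2 P3 P4) Q =
  w1 * sq_dist P1 Q + w2 * sq_dist P2 Q + w3 * sq_dist P3 Q + w4 * sq_dist P4 Q
  - (w1*w2*sq_dist P1 P2 + w1*w3*sq_dist P1 P3 + w1*w4*sq_dist P1 P4
     + w2*w3*sq_dist P2 P3 + w2*w4*sq_dist P2 P4 + w3*w4*sq_dist P3 P4).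
Proof.
  destruct W as [[x y] z]. unfold affine_bary. cbn [bary].
  apply sq_dist_affine4. field.
Qed.

Lemma affine_bary_tetrahedron (W : point) : affine_bary W T1 T2 T3 T4 = W.
Proof. destruct W as [[x y] z]. cbn. f_equal; [f_equal|]; field. Qed.

Lemma bary_sum (W : point) : let '(w1, w2, w3, w4) := bary W in w1 + w2 + w3 + w4 = 1.
Proof. destruct W as [[x y] z]. cbn. field. Qed.

Definition root_power_sum (lam : R) (ds : list R) : R :=
  fold_right (fun d acc => Rpower (sqrt d) lam + acc) 0 ds.

(* A similarity f need not be given as an affine map, but since all squared
   distances are determined by Lagrange's identity, the point with the same
   barycentric coordinates with respect to f T1, ..., f T4 is a faithful image
   of W: its distances to every f Q are s times those of W to Q. *)
Section Similarity.

Variable f : point -> point.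
Variable s : R.
Hypothesis s_pos : 0 < s.
Hypothesis f_sim : forall P Q, sq_dist (f P) (f Q) = s^2 * sq_dist P Q.

Definition image_point (W : point) : point := affine_bary W (f T1) (f T2) (f T3) (f T4).

Lemma image_point_sq_dist (W Q : point) : sq_dist (image_point W) (f Q) = s^2 * sq_dist W Q.
Proof.
  pose proof (sq_dist_affine_bary W (f T1) (f T2) (f T3) (f T4) (f Q)) as Himage.
  pose proof (sq_dist_affine_bary W T1 T2 T3 T4 Q) as Hsource.
  rewrite affine_bary_tetrahedron in Hsource.
  unfold image_point. destruct (bary W) as [[[w1 w2] w3] w4].
  rewrite Himage, Hsource, !f_sim. ring.
Qed.

Lemma image_point_on_sphere (W O : point) (r : R) :
  sq_dist W (0, 0, 0) = 3 ->
  sq_dist (f T1) O = r^2 -> sq_dist (f T2) O = r^2 ->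
  sq_dist (f T3) O = r^2 -> sq_dist (f T4) O = r^2 ->
  sq_dist (image_point W) O = r^2.
Proof.
  intros HW H1 H2 H3 H4.
  pose proof (sq_dist_affine_bary W (f T1) (f T2) (f T3) (f T4) O) as Himage.
  pose proof (sq_dist_affine_bary W T1 T2 T3 T4 (0, 0, 0)) as Hsource.
  pose proof (bary_sum W) as Hsum.
  rewrite affine_bary_tetrahedron, HW in Hsource.
  unfold image_point. destruct (bary W) as [[[w1 w2] w3] w4].
  set (D := w1*w2*sq_dist T1 T2 + w1*w3*sq_dist T1 T3 + w1*w4*sq_dist T1 T4
            + w2*w3*sq_dist T2 T3 + w2*w4*sq_dist T2 T4 + w3*w4*sq_dist T3 T4) in Hsource.
  (* the origin is equidistant (squared distance 3) from the T_i, as W is: so D = 0 *)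
  assert (HD : D = 0).
  { replace (sq_dist T1 (0, 0, 0)) with 3 in Hsource by (cbn; ring).
    replace (sq_dist T2 (0, 0, 0)) with 3 in Hsource by (cbn; ring).
    replace (sq_dist T3 (0, 0, 0)) with 3 in Hsource by (cbn; ring).
    replace (sq_dist T4 (0, 0, 0)) with 3 in Hsource by (cbn; ring).
    lra. }
  rewrite Himage, H1, H2, H3, H4, !f_sim.
  transitivity (r^2 * (w1 + w2 + w3 + w4) - s^2 * D); [unfold D; ring|].
  rewrite HD, Hsum. ring.
Qed.

Lemma power_sum_image (L : list point) (W : point) (lam : R) :
  (forall V, In V L -> 0 < sq_dist W V) ->
  power_sum (map f L) lam (image_point W) = Rpower s lam * root_power_sum lam (map (sq_dist W) L).
Proof.
  induction L as [|V L IH]; intro Hpos; [unfold power_sum, root_power_sum; cbn; ring|].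
  unfold power_sum, root_power_sum in *. cbn [map fold_right].
  rewrite IH by (intros; apply Hpos; right; assumption).
  rewrite dist3_sq_dist, image_point_sq_dist.
  assert (HV : 0 < sq_dist W V) by (apply Hpos; left; reflexivity).
  assert (HsqrtV : 0 < sqrt (sq_dist W V)) by (apply sqrt_lt_R0; exact HV).
  rewrite sqrt_mult_alt, sqrt_pow2 by (apply pow2_ge_0 || lra).
  rewrite <- Rpower_mult_distr by assumption.
  ring.
Qed.

Lemma constant_power_sum_value (L : list point) (O : point) (r : R) (W : point) (lam C : R) :
  In T1 L -> In T2 L -> In T3 L -> In T4 L ->
  circumscribes O r (map f L) ->
  sq_dist W (0, 0, 0) = 3 -> (forall V, In V L -> 0 < sq_dist W V) ->
  (forall M, dist3 O M = r -> ~ In M (map f L) -> power_sum (map f L) lam M = C) ->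
  Rpower s lam * root_power_sum lam (map (sq_dist W) L) = C.
Proof.
  intros HT1 HT2 HT3 HT4 Hcirc HW Hpos Hconst.
  assert (Hr : 0 <= r).
  { rewrite <- (Hcirc (f T1)) by (apply in_map; assumption).
    rewrite dist3_sq_dist. apply sqrt_pos. }
  assert (Hsphere : forall V, In V L -> sq_dist (f V) O = r^2).
  { intros V HV. rewrite sq_dist_sym, <- (Hcirc (f V)) by (apply in_map; assumption).
    rewrite dist3_sq_dist, pow2_sqrt by apply sq_dist_nonneg. reflexivity. }
  rewrite <- power_sum_image by exact Hpos.
  apply Hconst.
  - rewrite dist3_sq_dist, sq_dist_sym, (image_point_on_sphere W O r) by auto.
    apply sqrt_pow2. exact Hr.
  - intros Hin. apply in_map_iff in Hin as [V [HVM HV]].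
    pose proof (image_point_sq_dist W V) as Hd.
    rewrite <- HVM, sq_dist_refl in Hd.
    pose proof (Hpos V HV). pose proof (pow_lt s 2 s_pos). nra.
Qed.

End Similarity.

(* sqrt 3, the circumradius of the standard dodecahedron, and the scale kappa
   putting (0, phi, 1) on the circumsphere. *)
Definition sqrt3 : R := sqrt 3.
Definition kappa : R := sqrt (3 / (phi + 2)).

Lemma phi_facts : phi * phi = phi + 1 /\ / phi = phi - 1 /\ 1.618 < phi < 1.6181.
Proof.
  assert (h5 : sqrt 5 * sqrt 5 = 5) by (apply sqrt_sqrt; lra).
  assert (h0 : 0 <= sqrt 5) by apply sqrt_pos.
  assert (hb : 2.236 < sqrt 5 < 2.2361) by (split; nra).
  unfold phi. split; [nra|]. split; [|lra].
  field_simplify_eq; [nra|lra].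
Qed.

Lemma sqrt3_facts : sqrt3 * sqrt3 = 3 /\ 1.732 < sqrt3 < 1.7321.
Proof.
  assert (h : sqrt3 * sqrt3 = 3) by (apply sqrt_sqrt; lra).
  assert (h0 : 0 <= sqrt3) by apply sqrt_pos.
  split; [exact h|split; nra].
Qed.

Lemma kappa_facts : kappa * kappa * (phi + 2) = 3 /\ 0.9105 < kappa < 0.9107.
Proof.
  destruct phi_facts as [_ [_ hb]].
  assert (h : kappa * kappa = 3 / (phi + 2))
    by (apply sqrt_sqrt; apply Rlt_le; apply Rdiv_lt_0_compat; lra).
  assert (h0 : 0 <= kappa) by apply sqrt_pos.
  assert (h' : kappa * kappa * (phi + 2) = 3) by (rewrite h; field; lra).
  split; [exact h'|split; nra].
Qed.

Definition W1 : point := (sqrt3, 0, 0).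
Definition W2 : point := (0, kappa * phi, kappa).

Definition A1 : R := 6 - 2 * (sqrt3 * phi).
Definition A2 : R := 6 - 2 * sqrt3.
Definition A3 : R := 6 - 2 * (sqrt3 * (phi - 1)).
Definition A4 : R := 6.
Definition A5 : R := 6 + 2 * (sqrt3 * (phi - 1)).
Definition A6 : R := 6 + 2 * sqrt3.
Definition A7 : R := 6 + 2 * (sqrt3 * phi).
Definition B1 : R := 6 - 2 * (kappa * (phi + 1)).
Definition B2 : R := 6 - 2 * (kappa * (phi - 1)).
Definition B3 : R := 6 + 2 * (kappa * (phi - 1)).
Definition B4 : R := 6 + 2 * (kappa * (phi + 1)).

Lemma profile_W1 : map (sq_dist W1) std_dodeca_vertices =
  [A2; A2; A2; A2; A6; A6; A6; A6; A4; A4; A4; A4; A3; A3; A5; A5; A1; A1; A7; A7].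
Proof.
  destruct phi_facts as [hp [hi _]]; destruct sqrt3_facts as [hs _].
  unfold std_dodeca_vertices, A1, A2, A3, A4, A5, A6, A7, W1. cbn [map].
  repeat (apply (f_equal2 cons); [cbn [sq_dist]; rewrite ?hi; nra|]).
  reflexivity.
Qed.

Lemma profile_W2 : map (sq_dist W2) std_dodeca_vertices =
  [B1; B2; B3; B4; B1; B2; B3; B4; B1; B3; B2; B4; B1; B4; B1; B4; B2; B3; B2; B3].
Proof.
  destruct phi_facts as [hp [hi _]]; destruct kappa_facts as [hk _].
  assert (hk2 : kappa * kappa * (phi * phi) = kappa * kappa * (phi + 1)) by (rewrite hp; ring).
  assert (hk1 : kappa * (phi * phi) = kappa * (phi + 1)) by (rewrite hp; ring).
  unfold std_dodeca_vertices, B1, B2, B3, B4, W2. cbn [map].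
  repeat (apply (f_equal2 cons); [cbn [sq_dist]; rewrite ?hi; nra|]).
  reflexivity.
Qed.

Lemma distance_order : 0 < A1 /\ A1 < B1 /\ B1 < A2 /\ A2 < A3 /\ A3 < B2 /\ B2 < A4 /\
  A4 < B3 /\ B3 < A5 /\ A5 < A6 /\ A6 < B4 /\ B4 < A7.
Proof.
  destruct phi_facts as [_ [_ hb]]; destruct kappa_facts as [_ hkb];
  destruct sqrt3_facts as [_ hsb].
  assert (2.8 < sqrt3 * phi < 2.803) by (split; nra).
  assert (1.473 < kappa * phi < 1.474) by (split; nra).
  unfold A1, A2, A3, A4, A5, A6, A7, B1, B2, B3, B4.
  repeat split; lra.
Qed.

Definition difference_expsum : list (R * R) :=
  [(ln (sqrt A1), 2); (ln (sqrt B1), -5); (ln (sqrt A2), 4); (ln (sqrt A3), 2);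
   (ln (sqrt B2), -5); (ln (sqrt A4), 4); (ln (sqrt B3), -5); (ln (sqrt A5), 2);
   (ln (sqrt A6), 4); (ln (sqrt B4), -5); (ln (sqrt A7), 2)].

Lemma difference_expsum_eq (lam : R) :
  expsum difference_expsum lam =
  root_power_sum lam (map (sq_dist W1) std_dodeca_vertices) -
  root_power_sum lam (map (sq_dist W2) std_dodeca_vertices).
Proof.
  rewrite profile_W1, profile_W2. unfold expsum, root_power_sum, difference_expsum, Rpower.
  cbn [fold_right fst snd]. repeat rewrite (Rmult_comm lam (ln _)). ring.
Qed.

Lemma difference_exponents_increasing : exponents_increasing difference_expsum.
Proof.
  pose proof distance_order.
  assert (Hmono : forall a b, 0 < a -> a < b -> ln (sqrt a) < ln (sqrt b)).
  { intros a b ha hab. apply ln_increasing; [apply sqrt_lt_R0; exact ha|].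
    apply sqrt_lt_1_alt; lra. }
  unfold exponents_increasing, difference_expsum.
  repeat constructor; cbn [fst]; apply Hmono; lra.
Qed.

Lemma difference_coeffs_nonzero : coeffs_nonzero difference_expsum.
Proof. unfold coeffs_nonzero, difference_expsum. repeat constructor; cbn; lra. Qed.

Lemma difference_sign_changes : sign_changes difference_expsum = 8%nat.
Proof.
  unfold difference_expsum. cbn [sign_changes]. unfold sign_change. cbn [snd].
  repeat match goal with |- context [Rlt_dec ?a ?b] => destruct (Rlt_dec a b); try lra end.
  reflexivity.
Qed.

Lemma tetrahedron_in_dodecahedron :
  In T1 std_dodeca_vertices /\ In T2 std_dodeca_vertices /\
  In T3 std_dodeca_vertices /\ In T4 std_dodeca_vertices.
Proof. unfold T1, T2, T3, T4, std_dodeca_vertices. cbn. tauto. Qed.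

Lemma W1_on_sphere : sq_dist W1 (0, 0, 0) = 3.
Proof. destruct sqrt3_facts as [hs _]. unfold W1. cbn. nra. Qed.

Lemma W2_on_sphere : sq_dist W2 (0, 0, 0) = 3.
Proof.
  destruct phi_facts as [hp _]; destruct kappa_facts as [hk _]. unfold W2. cbn.
  assert (kappa * kappa * (phi * phi) = kappa * kappa * (phi + 1)) by (rewrite hp; ring).
  nra.
Qed.

Lemma W1_off_vertices (V : point) : In V std_dodeca_vertices -> 0 < sq_dist W1 V.
Proof.
  intro HV. pose proof distance_order.
  apply (in_map (sq_dist W1)) in HV. rewrite profile_W1 in HV.
  repeat (destruct HV as [<-|HV]; [lra|]). destruct HV.
Qed.

Lemma W2_off_vertices (V : point) : In V std_dodeca_vertices -> 0 < sq_dist W2 V.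
Proof.
  intro HV. pose proof distance_order.
  apply (in_map (sq_dist W2)) in HV. rewrite profile_W2 in HV.
  repeat (destruct HV as [<-|HV]; [lra|]). destruct HV.
Qed.

Theorem proposition4p1 :
  forall (A : list point) (O : point) (r : R),
    is_regular_dodecahedron_vertices A ->
    circumscribes O r A ->
    forall lams : list R,
      NoDup lams ->
      (forall lam, In lam lams -> const_on_sphere_minus A O r lam) ->
      (length lams <= 8)%nat.
Proof.
  intros A O r [f [[s [Hs Hdist]] ->]] Hcirc lams Hnodup Hconst.
  pose proof (similarity_sq_dist f s Hdist) as Hsim.
  destruct tetrahedron_in_dodecahedron as [HT1 [HT2 [HT3 HT4]]].
  assert (Hzeros : Forall (fun lam => expsum difference_expsum lam = 0) lams).
  { apply Forall_forall. intros lam Hlam. destruct (Hconst lam Hlam) as [C HC].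
    pose proof (constant_power_sum_value f s Hs Hsim _ O r W1 lam C HT1 HT2 HT3 HT4
                  Hcirc W1_on_sphere W1_off_vertices HC) as H1.
    pose proof (constant_power_sum_value f s Hs Hsim _ O r W2 lam C HT1 HT2 HT3 HT4
                  Hcirc W2_on_sphere W2_off_vertices HC) as H2.
    assert (Hpow : 0 < Rpower s lam) by apply exp_pos.
    rewrite difference_expsum_eq.
    apply (Rmult_eq_reg_l (Rpower s lam)); [|lra].
    rewrite Rmult_minus_distr_l, H1, H2. ring. }
  rewrite <- difference_sign_changes.
  apply descartes_rule_of_signs_distinct; try assumption.
  - exact difference_exponents_increasing.
  - exact difference_coeffs_nonzero.
  - discriminate.
Qed.
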